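(* Let $f({\bf X})=\sum_{k=1}^{K}\alpha_k g_k({\bf X}^{\mathrm H}{\bf A}_k{\bf X})$ be a generalized quadratic matrix function on $\mathbb{C}^{n\times r}$ and ${\bf X}_0\in\mathbb{C}^{n\times r}$. Define $$\bar f({\bf X};{\bf X}_0)=\sum_{k:\alpha_k>0}\alpha_k\, l_k({\bf X};{\bf X}_0)+\sum_{k:\alpha_k<0}\alpha_k\, u_k({\bf X};{\bf X}_0),$$ where $l_k$ and $u_k$ are the lower and upper bound functions associated with $(g_k,{\bf A}_k,{\bf X}_0)$. Then $\bar f(\cdot;{\bf X}_0)$ is concave on $\mathbb{C}^{n\times r}$, $\bar f({\bf X};{\bf X}_0)\le f({\bf X})$ for all ${\bf X}$, $\bar f({\bf X}_0;{\bf X}_0)=f({\bf X}_0)$, and $\bar f(\cdot;{\bf X}_0)$ and $f$ have the same (real Fréchet) derivative at ${\bf X}_0$.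
   Context: $\mathbb{H}^m$: real vector space of $m\times m$ complex Hermitian matrices, inner product $\mathrm{tr}({\bf U}{\bf V})$; ${\bf U}\succeq{\bf V}$ means ${\bf U}-{\bf V}$ is positive semidefinite. For ${\bf A}\in\mathbb{H}^n$ with eigen-decomposition $\sum_i\lambda_i{\bf u}_i{\bf u}_i^{\mathrm H}$, ${\bf A}^{(+)}=\sum_{\lambda_i>0}\lambda_i{\bf u}_i{\bf u}_i^{\mathrm H}$, ${\bf A}^{(-)}=\sum_{\lambda_i<0}\lambda_i{\bf u}_i{\bf u}_i^{\mathrm H}$. $g:\mathbb{H}^r\to\mathbb{R}$ is MND if ${\bf W}_1\succeq{\bf W}_2\Rightarrow g({\bf W}_1)\ge g({\bf W}_2)$ and MNI if ${\bf W}_1\succeq{\bf W}_2\Rightarrow g({\bf W}_1)\le g({\bf W}_2)$; $\mathcal{G}$ is the family of differentiable convex $g:\mathbb{H}^r\to\mathbb{R}$ that are MND or MNI; $\nabla g({\bf W}_0)\in\mathbb{H}^r$ is the gradient w.r.t. $\mathrm{tr}({\bf U}{\bf V})$. A generalized quadratic matrix function is $f({\bf X})=\sum_{k=1}^K\alpha_k g_k({\bf X}^{\mathrm H}{\bf A}_k{\bf X})$ with $\alpha_k\in\mathbb{R}$, ${\bf A}_k\in\mathbb{H}^n$, $g_k\in\mathcal{G}$. For $(g,{\bf A},{\bf X}_0)$ with ${\bf W}_0={\bf X}_0^{\mathrm H}{\bf A}{\bf X}_0$, ${\bf G}=\nabla g({\bf W}_0)$: the lower bound function is $l({\bf X};{\bf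 X}_0)=\mathrm{tr}({\bf L}({\bf X}){\bf G})+g({\bf W}_0)-\mathrm{tr}({\bf W}_0{\bf G})$, where ${\bf L}({\bf X})={\bf X}^{\mathrm H}{\bf A}^{(-)}{\bf X}+{\bf X}^{\mathrm H}{\bf A}^{(+)}{\bf X}_0+{\bf X}_0^{\mathrm H}{\bf A}^{(+)}{\bf X}-{\bf X}_0^{\mathrm H}{\bf A}^{(+)}{\bf X}_0$ if $g$ is MND and ${\bf L}({\bf X})={\bf X}^{\mathrm H}{\bf A}^{(+)}{\bf X}+{\bf X}^{\mathrm H}{\bf A}^{(-)}{\bf X}_0+{\bf X}_0^{\mathrm H}{\bf A}^{(-)}{\bf X}-{\bf X}_0^{\mathrm H}{\bf A}^{(-)}{\bf X}_0$ if $g$ is MNI; the upper bound function is $u({\bf X};{\bf X}_0)=g\big({\bf X}^{\mathrm H}{\bf A}^{(+)}{\bf X}+{\bf X}^{\mathrm H}{\bf A}^{(-)}{\bf X}_0+{\bf X}_0^{\mathrm H}{\bf A}^{(-)}{\bf X}-{\bf X}_0^{\mathrm H}{\bf A}^{(-)}{\bf X}_0\big)$ if $g$ is MND and $u({\bf X};{\bf X}_0)=g\big({\bf X}^{\mathrm H}{\bf A}^{(-)}{\bf X}+{\bf X}^{\mathrm H}{\bf A}^{(+)}{\bf X}_0+{\bf X}_0^{\mathrm H}{\bf A}^{(+)}{\bf X}-{\bf X}_0^{\mathrm H}{\bf A}^{(+)}{\bf X}_0\big)$ if $g$ is MNI. *)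

From HB Require Import structures.
From mathcomp Require Import all_boot all_order all_algebra.
From mathcomp Require Import complex sesquilinear spectral.
From mathcomp Require Import reals.
Set Implicit Arguments.
Unset Strict Implicit.
Unset Printing Implicit Defensive.
Import Order.TTheory GRing.Theory Num.Theory.
Local Open Scope ring_scope.

Section GQMF.
Variable R : realType.
Local Notation C := (R[i]).

Definition rC (a : R) : C := (a%:C)%C.

Definition cH m p (X : 'M[C]_(m, p)) : 'M[C]_(p, m) := (X ^t*)%sesqui.

Definition is_herm m (A : 'M[C]_m) : bool := A \is hermsymmx.

(* positive semidefinite: Hermitian and x^H A x >= 0 (i.e. real and >= 0) *)
Definition psd m (A : 'M[C]_m) : Prop :=
  is_herm A /\ forall x : 'cV[C]_m, 0 <= (cH x *m A *m x) 0 0.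

Definition loewner_ge m (U V : 'M[C]_m) : Prop := psd (U - V).

(* A^(+) and A^(-) from an eigendecomposition A = P^-1 diag(d) P, P unitary
   (spectral theorem of mathcomp's spectral.v) *)
Definition pos_part m (A : 'M[C]_m) : 'M[C]_m :=
  invmx (spectralmx A) *m
  diag_mx (map_mx (fun c : C => if 0 < c then c else 0) (spectral_diag A)) *m
  spectralmx A.
Definition neg_part m (A : 'M[C]_m) : 'M[C]_m :=
  invmx (spectralmx A) *m
  diag_mx (map_mx (fun c : C => if c < 0 then c else 0) (spectral_diag A)) *m
  spectralmx A.

(* Frobenius norm on C^{m x p} viewed as the real space R^{2mp} *)
Definition fnorm m p (X : 'M[C]_(m, p)) : R :=
  Num.sqrt (\sum_(i < m) \sum_(j < p)
              ((complex.Re (X i j)) ^+ 2 + (complex.Im (X i j)) ^+ 2)).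

(* real inner product tr(U V) on Hermitian matrices (real part; it is real there) *)
Definition rtr m (U V : 'M[C]_m) : R := complex.Re (\tr (U *m V)).

Definition rlinear m p (D : 'M[C]_(m, p) -> R) : Prop :=
  (forall X Y, D (X + Y) = D X + D Y) /\ (forall a X, D (rC a *: X) = a * D X).

Definition has_fderiv m p (f : 'M[C]_(m, p) -> R) (X0 : 'M[C]_(m, p))
  (D : 'M[C]_(m, p) -> R) : Prop :=
  rlinear D /\
  forall eps : R, 0 < eps -> exists2 delta : R, 0 < delta &
    forall H, fnorm H < delta -> `|f (X0 + H) - f X0 - D H| <= eps * fnorm H.

Definition is_gradient m (g : 'M[C]_m -> R) (W0 G : 'M[C]_m) : Prop :=
  is_herm G /\
  forall eps : R, 0 < eps -> exists2 delta : R, 0 < delta &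
    forall H, is_herm H -> fnorm H < delta ->
      `|g (W0 + H) - g W0 - rtr H G| <= eps * fnorm H.

Definition convex_herm m (g : 'M[C]_m -> R) : Prop :=
  forall W1 W2 (t : R), is_herm W1 -> is_herm W2 -> 0 <= t -> t <= 1 ->
    g (rC t *: W1 + rC (1 - t) *: W2) <= t * g W1 + (1 - t) * g W2.

Definition MND m (g : 'M[C]_m -> R) : Prop :=
  forall W1 W2, is_herm W1 -> is_herm W2 -> loewner_ge W1 W2 -> g W2 <= g W1.
Definition MNI m (g : 'M[C]_m -> R) : Prop :=
  forall W1 W2, is_herm W1 -> is_herm W2 -> loewner_ge W1 W2 -> g W1 <= g W2.

Definition in_family m (g : 'M[C]_m -> R) (Dg : 'M[C]_m -> 'M[C]_m) (mnd : bool)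
  : Prop :=
  convex_herm g /\ (forall W, is_herm W -> is_gradient g W (Dg W)) /\
  (if mnd then MND g else MNI g).

Definition gqmf n r K (alpha : 'I_K -> R) (A : 'I_K -> 'M[C]_n)
  (g : 'I_K -> 'M[C]_r -> R) (X : 'M[C]_(n, r)) : R :=
  \sum_(k < K) alpha k * g k (cH X *m A k *m X).

Definition Lmat n r (mnd : bool) (A : 'M[C]_n) (X0 X : 'M[C]_(n, r)) : 'M[C]_r :=
  if mnd then
    cH X *m neg_part A *m X + cH X *m pos_part A *m X0
    + cH X0 *m pos_part A *m X - cH X0 *m pos_part A *m X0
  else
    cH X *m pos_part A *m X + cH X *m neg_part A *m X0
    + cH X0 *m neg_part A *m X - cH X0 *m neg_part A *m X0.

Definition lowerb n r (g : 'M[C]_r -> R) (Dg : 'M[C]_r -> 'M[C]_r) (mnd : bool)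
  (A : 'M[C]_n) (X0 X : 'M[C]_(n, r)) : R :=
  let W0 := cH X0 *m A *m X0 in
  let G := Dg W0 in
  rtr (Lmat mnd A X0 X) G + g W0 - rtr W0 G.

Definition upperb n r (g : 'M[C]_r -> R) (mnd : bool)
  (A : 'M[C]_n) (X0 X : 'M[C]_(n, r)) : R :=
  if mnd then
    g (cH X *m pos_part A *m X + cH X *m neg_part A *m X0
       + cH X0 *m neg_part A *m X - cH X0 *m neg_part A *m X0)
  else
    g (cH X *m neg_part A *m X + cH X *m pos_part A *m X0
       + cH X0 *m pos_part A *m X - cH X0 *m pos_part A *m X0).

Definition fbar n r K (alpha : 'I_K -> R) (A : 'I_K -> 'M[C]_n)
  (g : 'I_K -> 'M[C]_r -> R) (Dg : 'I_K -> 'M[C]_r -> 'M[C]_r)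
  (mnd : 'I_K -> bool) (X0 X : 'M[C]_(n, r)) : R :=
  \sum_(k < K | 0 < alpha k) alpha k * lowerb (g k) (Dg k) (mnd k) (A k) X0 X
  + \sum_(k < K | alpha k < 0) alpha k * upperb (g k) (mnd k) (A k) X0 X.

Definition concave_on m p (h : 'M[C]_(m, p) -> R) : Prop :=
  forall X Y (t : R), 0 <= t -> t <= 1 ->
    t * h X + (1 - t) * h Y <= h (rC t *: X + rC (1 - t) *: Y).

End GQMF.

From HB Require Import structures.
From mathcomp Require Import all_boot all_order all_algebra.
From mathcomp Require Import complex sesquilinear spectral.
From mathcomp Require Import reals.
From mathcomp Require Import ring lra.
Import Order.TTheory GRing.Theory Num.Theory.
Local Open Scope ring_scope.

(* Both the matrix L(X) of a lower bound and the argument of an upper bound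
   have the form  Mq Q B X := X^H Q X + X^H B X0 + X0^H B X - X0^H B X0,
   the quadratic X^H (Q + B) X with its B-part linearized at X0, where
   {Q, B} = {A^(+), A^(-)} and Q + B = A. *)

Set Implicit Arguments.
Unset Strict Implicit.
Unset Printing Implicit Defensive.

(* Entrywise ring normalization for identities between sums of matrix
   products: products are abstracted, then each entry is a ring identity. *)
Ltac mx_ring :=
  repeat match goal with |- context [?A *m ?B] =>
    let x := fresh "x" in set x := (A *m B); clearbody x end;
  apply/matrixP => i j; rewrite !mxE; ring.

Section ConjugateTranspose.
Variable R : realType.
Local Notation C := R[i].
Implicit Types a t : R.

Lemma rC1B t : rC (1 - t) = 1 - rC t :> C.
Proof. by rewrite /rC rmorphB rmorph1. Qed.

Lemma rCM a b : rC (a * b) = rC a * rC b :> C.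
Proof. by rewrite /rC rmorphM. Qed.

Lemma cH_mul m p q (U : 'M[C]_(m, p)) (V : 'M[C]_(p, q)) :
  cH (U *m V) = cH V *m cH U.
Proof. by rewrite /cH trmx_mul map_mxM. Qed.

Lemma cHK m p (U : 'M[C]_(m, p)) : cH (cH U) = U.
Proof. exact: trmxCK. Qed.

Lemma cHD m p (U V : 'M[C]_(m, p)) : cH (U + V) = cH U + cH V.
Proof. by rewrite /cH linearD map_mxD. Qed.

Lemma cHN m p (U : 'M[C]_(m, p)) : cH (- U) = - cH U.
Proof. by rewrite /cH linearN map_mxN. Qed.

Lemma cHB m p (U V : 'M[C]_(m, p)) : cH (U - V) = cH U - cH V.
Proof. by rewrite cHD cHN. Qed.

Lemma cHZ m p a (U : 'M[C]_(m, p)) : cH (rC a *: U) = rC a *: cH U.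
Proof. by rewrite /cH linearZ /= map_mxZ; congr (_ *: _); exact: conjc_real. Qed.

Lemma hermP m (M : 'M[C]_m) : is_herm M <-> cH M = M.
Proof.
split => [/is_hermitianmxP|HM]; first by rewrite expr0 scale1r /cH => {2}->.
by apply/is_hermitianmxP; rewrite expr0 scale1r -{1}HM.
Qed.

Lemma herm0 m : is_herm (0 : 'M[C]_m).
Proof. by apply/hermP; rewrite /cH trmx0 map_mx0. Qed.

Lemma hermD m (M N : 'M[C]_m) : is_herm M -> is_herm N -> is_herm (M + N).
Proof. by move=> /hermP HM /hermP HN; apply/hermP; rewrite cHD HM HN. Qed.

Lemma hermN m (M : 'M[C]_m) : is_herm M -> is_herm (- M).
Proof. by move=> /hermP HM; apply/hermP; rewrite cHN HM. Qed.

Lemma hermB m (M N : 'M[C]_m) : is_herm M -> is_herm N -> is_herm (M - N).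
Proof. by move=> HM HN; apply/hermD/hermN. Qed.

Lemma hermZ m a (M : 'M[C]_m) : is_herm M -> is_herm (rC a *: M).
Proof. by move=> /hermP HM; apply/hermP; rewrite cHZ HM. Qed.

Lemma herm_congr n r (Q : 'M[C]_n) (X : 'M[C]_(n, r)) :
  is_herm Q -> is_herm (cH X *m Q *m X).
Proof. by move=> /hermP HQ; apply/hermP; rewrite !cH_mul cHK HQ mulmxA. Qed.

End ConjugateTranspose.

Section PositiveNegativeParts.
Variable R : realType.
Local Notation C := R[i].
Implicit Types a : R.

Lemma psd_herm m (P : 'M[C]_m) : psd P -> is_herm P.
Proof. by case. Qed.

Lemma psd_diag_congr m (P : 'M[C]_m) (d : 'rV[C]_m) :
  (forall i, 0 <= d 0 i) -> psd (cH P *m diag_mx d *m P).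
Proof.
move=> d_ge0; split.
  apply/herm_congr/hermP/matrixP => i j; rewrite !mxE.
  have [->|ne] := eqVneq i j; last by rewrite !mulr0n conjC0.
  by rewrite !mulr1n conj_Creal // ger0_real.
move=> x; rewrite -!mulmxA mulmxA -cH_mul mul_diag_mx !mxE.
apply: sumr_ge0 => i _; rewrite !mxE mulrCA mulr_ge0 //.
by rewrite mulrC mul_conjC_ge0.
Qed.

Lemma psd_congr n r (P : 'M[C]_n) (X : 'M[C]_(n, r)) :
  psd P -> psd (cH X *m P *m X).
Proof.
move=> [HP P_ge0]; split; first exact: herm_congr.
by move=> x; rewrite !mulmxA -cH_mul -!mulmxA mulmxA.
Qed.

Lemma psd_scale m a (P : 'M[C]_m) : 0 <= a -> psd P -> psd (rC a *: P).
Proof.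
move=> a_ge0 [HP P_ge0]; split; first exact: hermZ.
by move=> x; rewrite -scalemxAr -scalemxAl mxE mulr_ge0 // /rC ler0c.
Qed.

(* The spectral basis is unitary, so A^(+-) = U^H diag(d^(+-)) U. *)
Lemma pos_partE m (A : 'M[C]_m) : pos_part A =
  cH (spectralmx A) *m
  diag_mx (map_mx (fun c : C => if 0 < c then c else 0) (spectral_diag A)) *m
  spectralmx A.
Proof. by rewrite /pos_part invmx_unitary // spectral_unitarymx. Qed.

Lemma neg_partE m (A : 'M[C]_m) : neg_part A =
  cH (spectralmx A) *m
  diag_mx (map_mx (fun c : C => if c < 0 then c else 0) (spectral_diag A)) *m
  spectralmx A.
Proof. by rewrite /neg_part invmx_unitary // spectral_unitarymx. Qed.

Lemma pos_part_psd m (A : 'M[C]_m) : psd (pos_part A).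
Proof.
rewrite pos_partE; apply: psd_diag_congr => i; rewrite mxE.
by case: ifP => // /ltW.
Qed.

Lemma neg_part_nsd m (A : 'M[C]_m) : psd (- neg_part A).
Proof.
rewrite neg_partE -mulNmx -mulmxN -linearN /=.
apply: psd_diag_congr => i; rewrite !mxE.
by case: ifP => [/ltW|_]; rewrite ?oppr0 // oppr_ge0.
Qed.

Lemma herm_pos_part m (A : 'M[C]_m) : is_herm (pos_part A).
Proof. exact/psd_herm/pos_part_psd. Qed.

Lemma herm_neg_part m (A : 'M[C]_m) : is_herm (neg_part A).
Proof. by rewrite -[neg_part A]opprK; apply/hermN/psd_herm/neg_part_nsd. Qed.

(* A Hermitian matrix has real eigenvalues, hence A = A^(+) + A^(-). *)
Lemma pos_neg_partE m (A : 'M[C]_m) : is_herm A -> pos_part A + neg_part A = A.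
Proof.
move=> HA; have /orthomx_spectralP spA := hermitian_normalmx HA.
have d_real := hermitian_spectral_diag_real HA.
rewrite pos_partE neg_partE -mulmxDl -mulmxDr -linearD /=.
set d := spectral_diag A.
have -> : map_mx (fun c : C => if 0 < c then c else 0) d +
          map_mx (fun c : C => if c < 0 then c else 0) d = d.
  apply/matrixP => i j; rewrite !mxE.
  have := mxOverP d_real i j; rewrite -/d; set c := d i j => c_real.
  by case: (real_ltgt0P c_real) => [c0|c0|c0]; rewrite ?addr0 ?add0r // -c0 addr0.
by rewrite /cH -invmx_unitary ?spectral_unitarymx.
Qed.

End PositiveNegativeParts.

Section SplitQuadratic.
Variable R : realType.
Local Notation C := R[i].
Implicit Types t : R.

Definition Mq n r (Q B : 'M[C]_n) (X0 X : 'M[C]_(n, r)) : 'M[C]_r :=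
  cH X *m Q *m X + cH X *m B *m X0 + cH X0 *m B *m X - cH X0 *m B *m X0.

(* The differential of X |-> X^H S X at X0 in direction H. *)
Definition quad_diff n r (S : 'M[C]_n) (X0 H : 'M[C]_(n, r)) : 'M[C]_r :=
  cH H *m S *m X0 + cH X0 *m S *m H.

Lemma MqE n r (Q B : 'M[C]_n) (X0 X : 'M[C]_(n, r)) :
  Mq Q B X0 X = cH X *m (Q + B) *m X - cH (X - X0) *m B *m (X - X0).
Proof.
rewrite /Mq !(cHB, mulmxDl, mulmxDr, mulmxBl, mulmxBr, mulmxN, mulNmx); mx_ring.
Qed.

Lemma Mq_at n r (Q B : 'M[C]_n) (X0 : 'M[C]_(n, r)) :
  Mq Q B X0 X0 = cH X0 *m (Q + B) *m X0.
Proof. by rewrite MqE subrr mulmx0 subr0. Qed.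

Lemma Mq_quad n r (A : 'M[C]_n) (X0 X : 'M[C]_(n, r)) :
  Mq A 0 X0 X = cH X *m A *m X.
Proof. by rewrite MqE addr0 mulmx0 mul0mx subr0. Qed.

Lemma quad_sub_Mq n r (Q B A : 'M[C]_n) (X0 X : 'M[C]_(n, r)) :
  Q + B = A -> cH X *m A *m X - Mq Q B X0 X = cH (X - X0) *m B *m (X - X0).
Proof. by move=> <-; rewrite MqE opprB addrC subrK. Qed.

Lemma Mq_sub_quad n r (Q B A : 'M[C]_n) (X0 X : 'M[C]_(n, r)) :
  Q + B = A -> Mq Q B X0 X - cH X *m A *m X = cH (X - X0) *m (- B) *m (X - X0).
Proof. by move=> QBA; rewrite -opprB quad_sub_Mq // mulmxN mulNmx. Qed.

Lemma Mq_segment n r (Q B : 'M[C]_n) (X0 X Y : 'M[C]_(n, r)) t :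
  rC t *: Mq Q B X0 X + rC (1 - t) *: Mq Q B X0 Y
    - Mq Q B X0 (rC t *: X + rC (1 - t) *: Y)
  = rC (t * (1 - t)) *: (cH (X - Y) *m Q *m (X - Y)).
Proof.
rewrite /Mq !(cHD, cHB, cHN, cHZ, mulmxDl, mulmxDr, mulmxBl, mulmxBr, mulmxN, mulNmx).
rewrite rCM rC1B; move: (rC t) => s; rewrite -!(scalemxAl, scalemxAr); mx_ring.
Qed.

Lemma Mq_expand n r (Q B : 'M[C]_n) (X0 H : 'M[C]_(n, r)) :
  Mq Q B X0 (X0 + H) =
  Mq Q B X0 X0 + (quad_diff (Q + B) X0 H + cH H *m Q *m H).
Proof.
rewrite /Mq /quad_diff !(cHD, mulmxDl, mulmxDr, mulmxBl, mulmxBr, mulmxN, mulNmx); mx_ring.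
Qed.

Lemma herm_Mq n r (Q B : 'M[C]_n) (X0 X : 'M[C]_(n, r)) :
  is_herm Q -> is_herm B -> is_herm (Mq Q B X0 X).
Proof.
move=> /hermP HQ /hermP HB; apply/hermP.
rewrite /Mq !(cHD, cHB, cHN, cH_mul, cHK) HQ HB !mulmxA; mx_ring.
Qed.

Definition Ql n (mnd : bool) (A : 'M[C]_n) := if mnd then neg_part A else pos_part A.
Definition Bl n (mnd : bool) (A : 'M[C]_n) := if mnd then pos_part A else neg_part A.

Lemma LmatE n r mnd (A : 'M[C]_n) (X0 X : 'M[C]_(n, r)) :
  Lmat mnd A X0 X = Mq (Ql mnd A) (Bl mnd A) X0 X.
Proof. by case: mnd. Qed.

Lemma upperbE n r (g : 'M[C]_r -> R) mnd (A : 'M[C]_n) (X0 X : 'M[C]_(n, r)) :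
  upperb g mnd A X0 X = g (Mq (Bl mnd A) (Ql mnd A) X0 X).
Proof. by case: mnd. Qed.

Lemma QlBl n mnd (A : 'M[C]_n) : is_herm A -> Ql mnd A + Bl mnd A = A.
Proof. by case: mnd => HA; rewrite /Ql /Bl ?pos_neg_partE // addrC pos_neg_partE. Qed.

Lemma BlQl n mnd (A : 'M[C]_n) : is_herm A -> Bl mnd A + Ql mnd A = A.
Proof. by move=> HA; rewrite addrC QlBl. Qed.

Lemma herm_Ql n mnd (A : 'M[C]_n) : is_herm (Ql mnd A).
Proof. by case: mnd; [exact: herm_neg_part | exact: herm_pos_part]. Qed.

Lemma herm_Bl n mnd (A : 'M[C]_n) : is_herm (Bl mnd A).
Proof. by case: mnd; [exact: herm_pos_part | exact: herm_neg_part]. Qed.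

End SplitQuadratic.

Section Norms.
Variable R : realType.
Local Notation C := R[i].
Implicit Types a : R.

Lemma ReD (x y : C) : complex.Re (x + y) = complex.Re x + complex.Re y.
Proof. by case: x; case: y. Qed.
Lemma ImD (x y : C) : complex.Im (x + y) = complex.Im x + complex.Im y.
Proof. by case: x; case: y. Qed.
Lemma ReN (x : C) : complex.Re (- x) = - complex.Re x.
Proof. by case: x. Qed.
Lemma ReM (x y : C) :
  complex.Re (x * y) = complex.Re x * complex.Re y - complex.Im x * complex.Im y.
Proof. by case: x; case: y. Qed.
Lemma ImM (x y : C) :
  complex.Im (x * y) = complex.Re x * complex.Im y + complex.Im x * complex.Re y.
Proof. by case: x => a b; case: y. Qed.

Lemma rtrD m (M N G : 'M[C]_m) : rtr (M + N) G = rtr M G + rtr N G.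
Proof. by rewrite /rtr mulmxDl mxtraceD ReD. Qed.
Lemma rtrN m (M G : 'M[C]_m) : rtr (- M) G = - rtr M G.
Proof. by rewrite /rtr mulNmx linearN /= ReN. Qed.
Lemma rtrB m (M N G : 'M[C]_m) : rtr (M - N) G = rtr M G - rtr N G.
Proof. by rewrite rtrD rtrN. Qed.
Lemma rtrZ m a (M G : 'M[C]_m) : rtr (rC a *: M) G = a * rtr M G.
Proof. by rewrite /rtr -scalemxAl mxtraceZ ReM /= mul0r subr0. Qed.
Lemma rtrNr m (M G : 'M[C]_m) : rtr M (- G) = - rtr M G.
Proof. by rewrite /rtr mulmxN linearN /= ReN. Qed.

(* An auxiliary l1 modulus on C = R^2 and the entrywise norm N1 it induces;
   N1 is submultiplicative and equivalent to the Frobenius norm. *)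
Definition nu (z : C) : R := `|complex.Re z| + `|complex.Im z|.
Definition N1 m p (M : 'M[C]_(m, p)) : R := \sum_(i < m) \sum_(j < p) nu (M i j).

Lemma nu_ge0 z : 0 <= nu z.
Proof. by rewrite /nu addr_ge0. Qed.

Lemma nuD z w : nu (z + w) <= nu z + nu w.
Proof.
rewrite /nu ReD ImD.
have := ler_normD (complex.Re z) (complex.Re w).
have := ler_normD (complex.Im z) (complex.Im w); lra.
Qed.

Lemma nuM z w : nu (z * w) <= nu z * nu w.
Proof.
rewrite /nu ReM ImM.
set a := complex.Re z; set b := complex.Im z.
set c := complex.Re w; set d := complex.Im w.
have h1 := ler_normB (a * c) (b * d); have h2 := ler_normD (a * d) (b * c).
rewrite !normrM in h1 h2.
have := normr_ge0 a; have := normr_ge0 b; have := normr_ge0 c; have := normr_ge0 d.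
nra.
Qed.

Lemma nu_sum (I : Type) (s : seq I) (P : pred I) (F : I -> C) :
  nu (\sum_(i <- s | P i) F i) <= \sum_(i <- s | P i) nu (F i).
Proof.
elim/big_rec2: _ => [|i y1 y2 _ IH]; first by rewrite /nu /= normr0 addr0.
by apply: le_trans (nuD _ _) _; rewrite lerD2l.
Qed.

Lemma N1_ge0 m p (M : 'M[C]_(m, p)) : 0 <= N1 M.
Proof. by do 2![apply: sumr_ge0 => ? _]; apply: nu_ge0. Qed.

Lemma N1D m p (M N : 'M[C]_(m, p)) : N1 (M + N) <= N1 M + N1 N.
Proof.
rewrite /N1 -big_split /=; apply: ler_sum => i _.
rewrite -big_split /=; apply: ler_sum => j _; rewrite mxE; exact: nuD.
Qed.

Lemma N1Z m p a (M : 'M[C]_(m, p)) : N1 (rC a *: M) = `|a| * N1 M.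
Proof.
rewrite /N1 mulr_sumr; apply: eq_bigr => i _; rewrite mulr_sumr.
apply: eq_bigr => j _; rewrite mxE /nu ReM ImM /= !mul0r subr0 addr0 !normrM.
by rewrite mulrDr.
Qed.

Lemma N1_cH m p (M : 'M[C]_(m, p)) : N1 (cH M) = N1 M.
Proof.
rewrite /N1 exchange_big; apply: eq_bigr => i _; apply: eq_bigr => j _.
by rewrite /cH !mxE /nu; case: (M _ _) => a b /=; rewrite normrN.
Qed.

Lemma N1_mul m p q (M : 'M[C]_(m, p)) (N : 'M[C]_(p, q)) :
  N1 (M *m N) <= N1 M * N1 N.
Proof.
rewrite /N1 mulr_suml; apply: ler_sum => i _.
apply: (@le_trans _ _ (\sum_(j < q) \sum_(k < p) nu (M i k) * nu (N k j))).
  apply: ler_sum => j _; rewrite mxE; apply: le_trans (nu_sum _ _ _) _.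
  by apply: ler_sum => k _; apply: nuM.
rewrite exchange_big mulr_suml /=; apply: ler_sum => k _.
rewrite -mulr_sumr ler_wpM2l ?nu_ge0 //.
rewrite /N1 (bigD1 k) //= lerDl.
by do 2![apply: sumr_ge0 => ? _]; apply: nu_ge0.
Qed.

Lemma N1_congr n r s (U : 'M[C]_(n, r)) (S : 'M[C]_n) (V : 'M[C]_(n, s)) :
  N1 (cH U *m S *m V) <= N1 U * N1 S * N1 V.
Proof.
apply: le_trans (N1_mul _ _) _; rewrite ler_wpM2r ?N1_ge0 //.
by apply: le_trans (N1_mul _ _) _; rewrite N1_cH.
Qed.

Lemma fnorm_ge0 m p (M : 'M[C]_(m, p)) : 0 <= fnorm M.
Proof. exact: sqrtr_ge0. Qed.

Lemma double_sum_ge m p (F : 'I_m -> 'I_p -> R) i j :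
  (forall i j, 0 <= F i j) -> F i j <= \sum_(i < m) \sum_(j < p) F i j.
Proof.
move=> F_ge0; rewrite (bigD1 i) //= (bigD1 j) //= -addrA lerDl.
by rewrite addr_ge0 //; do ?[apply: sumr_ge0 => ? _]; apply: F_ge0.
Qed.

Lemma nu_le_N1 m p (M : 'M[C]_(m, p)) i j : nu (M i j) <= N1 M.
Proof. exact: (@double_sum_ge m p (fun i j => nu (M i j)) i j (fun _ _ => nu_ge0 _)). Qed.

Lemma fnorm_le_N1 m p (M : 'M[C]_(m, p)) : fnorm M <= N1 M.
Proof.
rewrite /fnorm -(ger0_norm (N1_ge0 M)) -sqrtr_sqr ler_wsqrtr //.
rewrite expr2 {2}/N1 mulr_sumr; apply: ler_sum => i _; rewrite mulr_sumr.
apply: ler_sum => j _.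
have entry := nu_le_N1 M i j; have := nu_ge0 (M i j); have := normr_ge0 (complex.Re (M i j)).
have := normr_ge0 (complex.Im (M i j)).
rewrite -(real_normK (num_real (complex.Re (M i j)))).
rewrite -(real_normK (num_real (complex.Im (M i j)))) /nu in entry *; nra.
Qed.

Lemma N1_le_fnorm m p (M : 'M[C]_(m, p)) : N1 M <= (2 * (m * p)%:R) * fnorm M.
Proof.
have entry i j (x : R) : x ^+ 2 <= complex.Re (M i j) ^+ 2 + complex.Im (M i j) ^+ 2 ->
    `|x| <= fnorm M.
  move=> hx; rewrite -sqrtr_sqr /fnorm ler_wsqrtr //; apply: le_trans hx _.
  apply: (@double_sum_ge m p (fun i j => complex.Re (M i j) ^+ 2 + complex.Im (M i j) ^+ 2) i j).
  by move=> *; rewrite addr_ge0 ?sqr_ge0.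
apply: (@le_trans _ _ (\sum_(i < m) \sum_(j < p) (2 * fnorm M))).
  apply: ler_sum => i _; apply: ler_sum => j _.
  have := entry i j (complex.Re (M i j)); rewrite lerDl sqr_ge0 => /(_ isT).
  have := entry i j (complex.Im (M i j)); rewrite lerDr sqr_ge0 => /(_ isT).
  rewrite /nu; lra.
rewrite !sumr_const !card_ord -mulrnA mulr_natr mulrC; lra.
Qed.

Lemma rtr_bound m (M G : 'M[C]_m) : `|rtr M G| <= N1 M * N1 G.
Proof.
apply: le_trans (N1_mul M G); apply: (@le_trans _ _ (nu (\tr (M *m G)))).
  by rewrite /rtr /nu lerDl.
apply: le_trans (nu_sum _ _ _) _; rewrite /N1; apply: ler_sum => i _.
by rewrite [leRHS](bigD1 i) //= lerDl sumr_ge0 // => j _; apply: nu_ge0.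
Qed.

End Norms.

Section GradientFacts.
Variable R : realType.
Local Notation C := R[i].
Variable m : nat.
Implicit Types (g : 'M[C]_m -> R) (G H P W : 'M[C]_m).

Lemma gradient_along g W0 G H : is_gradient g W0 G -> is_herm H ->
  forall eps, 0 < eps -> exists2 t : R, 0 < t <= 1 &
    `|g (W0 + rC t *: H) - g W0 - t * rtr H G| <= eps * t.
Proof.
move=> [_ Hg] HH eps eps_gt0; have N0 := N1_ge0 H.
have N1p : 0 < N1 H + 1 by lra.
have eps'_gt0 : 0 < eps / (N1 H + 1) by rewrite divr_gt0.
have eps'E : eps / (N1 H + 1) * (N1 H + 1) = eps by rewrite mulfVK // gt_eqF.
have [d d_gt0 Hd] := Hg _ eps'_gt0.
have den_gt0 : 0 < 1 + d + N1 H by lra.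
pose t := d / (1 + d + N1 H).
have t_gt0 : 0 < t by rewrite divr_gt0.
have tE : t * (1 + d + N1 H) = d by rewrite mulfVK // gt_eqF.
have NtH : N1 (rC t *: H) = t * N1 H by rewrite N1Z ger0_norm // ltW.
exists t; first by rewrite t_gt0 /=; nra.
have tH_small : fnorm (rC t *: H) < d.
  by apply: le_lt_trans (fnorm_le_N1 _) _; rewrite NtH; nra.
rewrite -rtrZ; apply: le_trans (Hd _ (hermZ t HH) tH_small) _.
apply: le_trans (ler_wpM2l (ltW eps'_gt0) (fnorm_le_N1 _)) _; rewrite NtH.
move: eps'E (ltW eps'_gt0); set e := eps / _ => eps'E e_ge0; nra.
Qed.

Lemma gradient_slope_le g W0 G H (b : R) : is_gradient g W0 G -> is_herm H ->
  (forall t : R, 0 < t -> t <= 1 -> g (W0 + rC t *: H) - g W0 <= t * b) ->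
  rtr H G <= b.
Proof.
move=> Hg HH Hb; apply/ler_addgt0Pr => eps eps_gt0.
have [t /andP [t_gt0 t_le1] Ht] := gradient_along Hg HH eps_gt0.
have := Hb t t_gt0 t_le1; have := ler_norm (- (g (W0 + rC t *: H) - g W0 - t * rtr H G)).
rewrite normrN => hn hb.
have : t * (rtr H G - (b + eps)) <= 0 by nra.
by rewrite pmulr_rle0 // subr_le0.
Qed.

Lemma gradient_support g W0 G W : convex_herm g -> is_gradient g W0 G ->
  is_herm W0 -> is_herm W -> g W0 + rtr (W - W0) G <= g W.
Proof.
move=> g_cvx Hg HW0 HW; rewrite -lerBrDl.
apply: (gradient_slope_le Hg (hermB HW HW0)) => t t_gt0 t_le1.
have segment : W0 + rC t *: (W - W0) = rC t *: W + rC (1 - t) *: W0.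
  by rewrite rC1B; move: (rC t) => s; apply/matrixP => i j; rewrite !mxE; ring.
have := g_cvx W W0 t HW HW0 (ltW t_gt0) t_le1; rewrite -segment; lra.
Qed.

(* -G is the gradient of -g; this reduces MND facts to MNI facts. *)
Lemma gradient_opp g W0 G :
  is_gradient g W0 G -> is_gradient (fun W => - g W) W0 (- G).
Proof.
move=> [HG Hg]; split; first exact: hermN.
move=> eps /Hg [d d_gt0 Hd]; exists d => // H HH Hsmall.
rewrite rtrNr -normrN.
have -> : - (- g (W0 + H) - - g W0 - - rtr H G) = g (W0 + H) - g W0 - rtr H G by ring.
exact: Hd.
Qed.

Lemma gradient_MNI g W0 G P :
  MNI g -> is_gradient g W0 G -> is_herm W0 -> psd P -> rtr P G <= 0.
Proof.
move=> g_mni Hg HW0 HP; have HPh := psd_herm HP.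
apply: (gradient_slope_le Hg HPh) => t t_gt0 _; rewrite mulr0 subr_le0.
apply: g_mni; [exact: hermD HW0 (hermZ t HPh) | exact: HW0 |].
by rewrite /loewner_ge addrC addKr; apply: psd_scale => //; exact: ltW.
Qed.

Lemma gradient_MND g W0 G P :
  MND g -> is_gradient g W0 G -> is_herm W0 -> psd P -> 0 <= rtr P G.
Proof.
move=> g_mnd Hg HW0 HP; rewrite -oppr_le0 -rtrNr.
apply: gradient_MNI (gradient_opp Hg) HW0 HP => W1 W2 HW1 HW2 W12.
by rewrite lerN2; apply: g_mnd.
Qed.

Lemma gradient_affine (W0 G : 'M[C]_m) (c : R) :
  is_herm G -> is_gradient (fun W => rtr W G + c) W0 G.
Proof.
move=> HG; split => // eps eps_gt0; exists 1 => // H _ _.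
have -> : rtr (W0 + H) G + c - (rtr W0 G + c) - rtr H G = 0 by rewrite rtrD; ring.
by rewrite normr0 mulr_ge0 ?fnorm_ge0 // ltW.
Qed.

End GradientFacts.

Section Concavity.
Variable R : realType.
Local Notation C := R[i].
Variables m p : nat.
Implicit Types f h : 'M[C]_(m, p) -> R.

Definition convex_on h : Prop :=
  forall X Y (t : R), 0 <= t -> t <= 1 ->
    h (rC t *: X + rC (1 - t) *: Y) <= t * h X + (1 - t) * h Y.

Lemma concave_ext f h : (forall X, f X = h X) -> concave_on f -> concave_on h.
Proof. by move=> fh f_cav X Y t t0 t1; rewrite -!fh; apply: f_cav. Qed.

Lemma concave_shift f (c : R) : concave_on f -> concave_on (fun X => f X + c).
Proof. by move=> f_cav X Y t t0 t1; have := f_cav X Y t t0 t1; lra. Qed.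

Lemma concave_scale h (c : R) : 0 <= c -> concave_on h -> concave_on (fun X => c * h X).
Proof.
move=> c_ge0 h_cav X Y t t0 t1; have := h_cav X Y t t0 t1.
have -> : t * (c * h X) + (1 - t) * (c * h Y) = c * (t * h X + (1 - t) * h Y) by ring.
exact: ler_wpM2l.
Qed.

Lemma convex_scale h (c : R) : c <= 0 -> convex_on h -> concave_on (fun X => c * h X).
Proof.
move=> c_le0 h_cvx X Y t t0 t1; have := h_cvx X Y t t0 t1.
have -> : t * (c * h X) + (1 - t) * (c * h Y) = c * (t * h X + (1 - t) * h Y) by ring.
exact: ler_wnM2l.
Qed.

Lemma concave_sum (I : finType) (F : I -> 'M[C]_(m, p) -> R) :
  (forall i, concave_on (F i)) -> concave_on (fun X => \sum_i F i X).
Proof.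
move=> F_cav X Y t t0 t1; rewrite !mulr_sumr -big_split /=.
by apply: ler_sum => i _; apply: F_cav.
Qed.

End Concavity.


Section FrechetCalculus.
Variable R : realType.
Local Notation C := R[i].
Variables m p : nat.
Implicit Types (f h : 'M[C]_(m, p) -> R) (rho : 'M[C]_(m, p) -> R).

(* rho(H) = o(|H|) as H -> 0; has_fderiv f X0 D unfolds to
   rlinear D /\ small (fun H => f (X0 + H) - f X0 - D H). *)
Definition small rho : Prop :=
  forall eps : R, 0 < eps -> exists2 delta : R, 0 < delta &
    forall H, fnorm H < delta -> `|rho H| <= eps * fnorm H.

Lemma small_ext rho rho' : (forall H, rho H = rho' H) -> small rho -> small rho'.
Proof.
move=> e Hs eps /Hs [d d_gt0 Hd]; exists d => // H /Hd; by rewrite e.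
Qed.

Lemma smallD rho rho' : small rho -> small rho' -> small (fun H => rho H + rho' H).
Proof.
move=> Hs Hs' eps eps_gt0; have e2_gt0 : 0 < eps / 2 by rewrite divr_gt0.
have [d d_gt0 Hd] := Hs _ e2_gt0; have [d' d'_gt0 Hd'] := Hs' _ e2_gt0.
exists (Num.min d d'); first by rewrite lt_min d_gt0 d'_gt0.
move=> H; rewrite lt_min => /andP [/Hd h1 /Hd' h2].
apply: le_trans (ler_normD _ _) _.
by rewrite [eps]splitr mulrDl; apply: lerD.
Qed.

Lemma smallZ rho (c : R) : small rho -> small (fun H => c * rho H).
Proof.
move=> Hs eps eps_gt0.
have c1_gt0 : 0 < `|c| + 1 by rewrite ltr_pwDr // normr_ge0.
have e_gt0 : 0 < eps / (`|c| + 1) by rewrite divr_gt0.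
have eE : eps / (`|c| + 1) * (`|c| + 1) = eps by rewrite mulfVK // gt_eqF.
have [d d_gt0 Hd] := Hs _ e_gt0; exists d => // H /Hd hH.
rewrite normrM; apply: le_trans (ler_wpM2l (normr_ge0 c) hH) _.
rewrite mulrA ler_wpM2r ?fnorm_ge0 //.
move: eE (ltW e_gt0) (normr_ge0 c); set e := eps / _ => eE e_ge0 c_ge0; nra.
Qed.

Lemma small_quadratic rho (c : R) : 0 <= c ->
  (forall H, `|rho H| <= c * fnorm H ^+ 2) -> small rho.
Proof.
move=> c_ge0 Hrho eps eps_gt0; have c1_gt0 : 0 < c + 1 by lra.
exists (eps / (c + 1)); first by rewrite divr_gt0.
move=> H; rewrite ltr_pdivlMr // => hH; apply: le_trans (Hrho H) _.
have := fnorm_ge0 H; nra.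
Qed.

Lemma fderiv_ext f h X0 D D' : (forall X, f X = h X) -> (forall H, D H = D' H) ->
  has_fderiv f X0 D -> has_fderiv h X0 D'.
Proof.
move=> fh DD' [[D_add D_scale] Hs]; split.
  by split => [X Y|a X]; rewrite -!DD' ?D_add ?D_scale.
by apply: small_ext Hs => H; rewrite !fh DD'.
Qed.

Lemma fderivD f h X0 D D' : has_fderiv f X0 D -> has_fderiv h X0 D' ->
  has_fderiv (fun X => f X + h X) X0 (fun H => D H + D' H).
Proof.
move=> [[D_add D_scale] Hs] [[D'_add D'_scale] Hs']; split.
  by split => [X Y|a X]; rewrite ?D_add ?D'_add ?D_scale ?D'_scale; ring.
by apply: small_ext (smallD Hs Hs') => H; ring.
Qed.

Lemma fderivZ f X0 D (c : R) : has_fderiv f X0 D ->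
  has_fderiv (fun X => c * f X) X0 (fun H => c * D H).
Proof.
move=> [[D_add D_scale] Hs]; split.
  by split => [X Y|a X]; rewrite ?D_add ?D_scale; ring.
by apply: small_ext (smallZ c Hs) => H; ring.
Qed.

Lemma fderiv_sum (I : Type) (s : seq I) (F : I -> 'M[C]_(m, p) -> R)
    (D : I -> 'M[C]_(m, p) -> R) X0 :
  (forall i, has_fderiv (F i) X0 (D i)) ->
  has_fderiv (fun X => \sum_(i <- s) F i X) X0 (fun H => \sum_(i <- s) D i H).
Proof.
move=> HF; elim: s => [|i s IH].
  split; first by split => *; rewrite !big_nil ?mulr0 ?addr0.
  move=> eps eps_gt0; exists 1 => // H _; rewrite !big_nil !subrr normr0.
  by rewrite mulr_ge0 ?fnorm_ge0 // ltW.
by apply: fderiv_ext (fderivD (HF i) IH) => *; rewrite big_cons.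
Qed.

End FrechetCalculus.

Section ChainRule.
Variable R : realType.
Local Notation C := R[i].
Variables n r : nat.

Lemma small_gradient_comp (phi : 'M[C]_r -> R) (W0 G : 'M[C]_r)
    (P : 'M[C]_(n, r) -> 'M[C]_r) (c : R) :
  is_gradient phi W0 G -> (forall H, is_herm (P H)) -> 0 <= c ->
  (forall H, fnorm H <= 1 -> fnorm (P H) <= c * fnorm H) ->
  small (fun H => phi (W0 + P H) - phi W0 - rtr (P H) G).
Proof.
move=> [_ Hphi] HP c_ge0 P_lin eps eps_gt0; have c1_gt0 : 0 < c + 1 by lra.
have e_gt0 : 0 < eps / (c + 1) by rewrite divr_gt0.
have eE : eps / (c + 1) * (c + 1) = eps by rewrite mulfVK // gt_eqF.
have [d d_gt0 Hd] := Hphi _ e_gt0.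
exists (Num.min 1 (d / (c + 1))); first by rewrite lt_min ltr01 divr_gt0.
move=> H; rewrite lt_min ltr_pdivlMr // => /andP [H_lt1 H_ltd].
have f_ge0 := fnorm_ge0 H; have PH := P_lin H (ltW H_lt1).
have PH_ltd : fnorm (P H) < d by apply: le_lt_trans PH _; nra.
apply: le_trans (Hd _ (HP H) PH_ltd) _.
move: eE (ltW e_gt0); set e := eps / _ => eE e_ge0; nra.
Qed.

Variables (Q B : 'M[C]_n) (X0 : 'M[C]_(n, r)).
(* The constant with N1 H <= k * fnorm H on n x r matrices. *)
Let k : R := 2 * (n * r)%:R.

Lemma k_ge0 : 0 <= k.
Proof. by rewrite mulr_ge0. Qed.

Lemma N1_quad_diff (S : 'M[C]_n) H :
  N1 (quad_diff S X0 H) <= 2 * N1 S * N1 X0 * N1 H.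
Proof.
apply: le_trans (N1D _ _) _.
have -> : 2 * N1 S * N1 X0 * N1 H = N1 H * N1 S * N1 X0 + N1 X0 * N1 S * N1 H by ring.
exact: lerD (N1_congr _ _ _) (N1_congr _ _ _).
Qed.

Lemma expansion_linear_bound H : fnorm H <= 1 ->
  fnorm (quad_diff (Q + B) X0 H + cH H *m Q *m H)
    <= (2 * N1 (Q + B) * N1 X0 + N1 Q * k) * k * fnorm H.
Proof.
move=> H_le1; have a_le : N1 H <= k * fnorm H := N1_le_fnorm H.
have a_le_k : N1 H <= k by apply: le_trans a_le _; rewrite ler_piMr ?k_ge0.
have sx_ge0 : 0 <= 2 * N1 (Q + B) * N1 X0 by rewrite !mulr_ge0 ?N1_ge0.
have qa_ge0 : 0 <= N1 H * N1 Q by rewrite mulr_ge0 ?N1_ge0.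
apply: le_trans (fnorm_le_N1 _) _; apply: le_trans (N1D _ _) _.
have h1 : N1 (quad_diff (Q + B) X0 H) <= 2 * N1 (Q + B) * N1 X0 * (k * fnorm H).
  by apply: le_trans (N1_quad_diff _ _) _; rewrite ler_wpM2l.
have h2 : N1 (cH H *m Q *m H) <= N1 H * N1 Q * (k * fnorm H).
  by apply: le_trans (N1_congr _ _ _) _; rewrite ler_wpM2l.
have h3 : N1 H * N1 Q * (k * fnorm H) <= k * N1 Q * (k * fnorm H).
  by rewrite ler_wpM2r ?mulr_ge0 ?k_ge0 ?fnorm_ge0 // ler_wpM2r ?N1_ge0.
have -> : (2 * N1 (Q + B) * N1 X0 + N1 Q * k) * k * fnorm H =
  2 * N1 (Q + B) * N1 X0 * (k * fnorm H) + k * N1 Q * (k * fnorm H) by ring.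
lra.
Qed.

Lemma expansion_quadratic_bound (G : 'M[C]_r) H :
  `|rtr (cH H *m Q *m H) G| <= (k * k * N1 Q * N1 G) * fnorm H ^+ 2.
Proof.
have a_le : N1 H <= k * fnorm H := N1_le_fnorm H.
have aa : N1 H * N1 H <= (k * fnorm H) * (k * fnorm H) by rewrite ler_pM ?N1_ge0.
apply: le_trans (rtr_bound _ _) _; apply: le_trans (ler_wpM2r (N1_ge0 G) (N1_congr H Q H)) _.
have -> : k * k * N1 Q * N1 G * fnorm H ^+ 2 =
  (k * fnorm H) * (k * fnorm H) * (N1 Q * N1 G) by ring.
have -> : N1 H * N1 Q * N1 H * N1 G = N1 H * N1 H * (N1 Q * N1 G) by ring.
by rewrite ler_wpM2r ?mulr_ge0 ?N1_ge0.
Qed.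

Lemma quad_diff_rlinear (S : 'M[C]_n) (G : 'M[C]_r) :
  rlinear (fun H => rtr (quad_diff S X0 H) G).
Proof.
split => [H1 H2|a H]; rewrite /quad_diff.
  by rewrite cHD !(mulmxDl, mulmxDr) !rtrD addrACA.
by rewrite cHZ -!scalemxAl -scalemxAr -scalerDr rtrZ.
Qed.

Lemma fderiv_Mq_comp (phi : 'M[C]_r -> R) (G : 'M[C]_r) :
  is_herm Q -> is_herm B -> is_gradient phi (Mq Q B X0 X0) G ->
  has_fderiv (fun X => phi (Mq Q B X0 X)) X0
    (fun H => rtr (quad_diff (Q + B) X0 H) G).
Proof.
move=> HQ HB Hphi; split; first exact: quad_diff_rlinear.
pose P H := quad_diff (Q + B) X0 H + cH H *m Q *m H.
have HP H : is_herm (P H).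
  have -> : P H = Mq Q B X0 (X0 + H) - Mq Q B X0 X0 by rewrite Mq_expand addrC addKr.
  by apply: hermB; apply: herm_Mq.
have c_ge0 : 0 <= (2 * N1 (Q + B) * N1 X0 + N1 Q * k) * k.
  by rewrite !(mulr_ge0, addr_ge0, N1_ge0, k_ge0).
have cq_ge0 : 0 <= k * k * N1 Q * N1 G by rewrite !(mulr_ge0, N1_ge0, k_ge0).
apply: small_ext (smallD (small_gradient_comp Hphi HP c_ge0 expansion_linear_bound)
                         (small_quadratic cq_ge0 (expansion_quadratic_bound G))) => H.
by rewrite /= Mq_expand rtrD; ring.
Qed.

End ChainRule.

Section BoundFunctions.
Variable R : realType.
Local Notation C := R[i].
Variables (n r : nat) (g : 'M[C]_r -> R) (Dg : 'M[C]_r -> 'M[C]_r) (mnd : bool).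
Variables (A : 'M[C]_n) (X0 : 'M[C]_(n, r)).
Hypotheses (HA : is_herm A) (g_fam : in_family g Dg mnd).

Let W0 := cH X0 *m A *m X0.
Let G := Dg W0.

Lemma herm_W0 : is_herm W0.
Proof. exact: herm_congr. Qed.

Lemma gradient_W0 : is_gradient g W0 G.
Proof. by case: g_fam => _ [Hg _]; apply/Hg/herm_W0. Qed.

Lemma lowerbE X :
  lowerb g Dg mnd A X0 X = rtr (Mq (Ql mnd A) (Bl mnd A) X0 X) G + (g W0 - rtr W0 G).
Proof. by rewrite /lowerb /= LmatE addrA. Qed.

(* X^H A X - L(X) is a congruence of Bl, whose sign matches the monotonicity
   of g; hence g(L(X)) <= g(X^H A X).  Symmetrically for the argument of u. *)
Lemma g_at_L_le X : g (Mq (Ql mnd A) (Bl mnd A) X0 X) <= g (cH X *m A *m X).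
Proof.
case: g_fam => _ [_ g_mono].
have HL := herm_Mq X0 X (herm_Ql mnd A) (herm_Bl mnd A).
have HW := herm_congr X HA.
case: mnd g_mono HL => g_mono HL.
- apply: (g_mono _ _ HW HL); rewrite /loewner_ge (quad_sub_Mq _ _ (QlBl true HA)).
  exact/psd_congr/pos_part_psd.
- apply: (g_mono _ _ HL HW); rewrite /loewner_ge (Mq_sub_quad _ _ (QlBl false HA)).
  exact/psd_congr/neg_part_nsd.
Qed.

Lemma g_at_U_ge X : g (cH X *m A *m X) <= g (Mq (Bl mnd A) (Ql mnd A) X0 X).
Proof.
case: g_fam => _ [_ g_mono].
have HU := herm_Mq X0 X (herm_Bl mnd A) (herm_Ql mnd A).
have HW := herm_congr X HA.
case: mnd g_mono HU => g_mono HU.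
- apply: (g_mono _ _ HU HW); rewrite /loewner_ge (Mq_sub_quad _ _ (BlQl true HA)).
  exact/psd_congr/neg_part_nsd.
- apply: (g_mono _ _ HW HU); rewrite /loewner_ge (quad_sub_Mq _ _ (BlQl false HA)).
  exact/psd_congr/pos_part_psd.
Qed.

(* Gradient inequality at W0, then monotonicity. *)
Lemma lowerb_le X : lowerb g Dg mnd A X0 X <= g (cH X *m A *m X).
Proof.
case: g_fam => g_cvx _.
have HL := herm_Mq X0 X (herm_Ql mnd A) (herm_Bl mnd A).
apply: le_trans (g_at_L_le X); apply: le_trans (gradient_support g_cvx gradient_W0 herm_W0 HL).
by rewrite lowerbE rtrB; lra.
Qed.

Lemma upperb_ge X : g (cH X *m A *m X) <= upperb g mnd A X0 X.
Proof. by rewrite upperbE; apply: g_at_U_ge. Qed.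

(* Both bounds touch g(X^H A X) at X0 (there L(X0) = U(X0) = W0). *)
Lemma lowerb_at : lowerb g Dg mnd A X0 X0 = g W0.
Proof. by rewrite lowerbE Mq_at QlBl // addrC subrK. Qed.

Lemma upperb_at : upperb g mnd A X0 X0 = g W0.
Proof. by rewrite upperbE Mq_at BlQl. Qed.

(* The gradient G pairs nonpositively with every congruence of Ql:
   Ql = A^(-) is nsd and g is MND, or Ql = A^(+) is psd and g is MNI. *)
Lemma gradient_Ql_pairing (Z : 'M[C]_(n, r)) : rtr (cH Z *m Ql mnd A *m Z) G <= 0.
Proof.
case: g_fam => _ [_ g_mono]; have Hg := gradient_W0.
case: mnd g_mono Hg => g_mono Hg /=.
- rewrite -[neg_part A]opprK mulmxN mulNmx rtrN oppr_le0.
  exact/(gradient_MND g_mono Hg herm_W0)/psd_congr/neg_part_nsd.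
- exact/(gradient_MNI g_mono Hg herm_W0)/psd_congr/pos_part_psd.
Qed.

Lemma Mq_pairing_concave (Q B : 'M[C]_n) (H : 'M[C]_r) :
  (forall Z : 'M[C]_(n, r), rtr (cH Z *m Q *m Z) H <= 0) ->
  concave_on (fun X => rtr (Mq Q B X0 X) H).
Proof.
move=> Q_neg X Y t t0 t1.
have := congr1 (fun M => rtr M H) (Mq_segment Q B X0 X Y t).
rewrite /= !(rtrB, rtrD, rtrZ) => gap.
have : t * (1 - t) * rtr (cH (X - Y) *m Q *m (X - Y)) H <= 0.
  by rewrite mulr_ge0_le0 // mulr_ge0 // subr_ge0.
by rewrite -gap subr_le0.
Qed.

Lemma lowerb_concave : concave_on (lowerb g Dg mnd A X0).
Proof.
apply: concave_ext (fun X => esym (lowerbE X)) _; apply: concave_shift.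
exact/Mq_pairing_concave/gradient_Ql_pairing.
Qed.

(* Along segments the upper-bound argument deviates from affinity by a
   congruence of Bl, on the side where g is monotone; convexity of g ends it. *)
Lemma upperb_convex : convex_on (upperb g mnd A X0).
Proof.
case: g_fam => g_cvx [_ g_mono] X Y t t0 t1; rewrite !upperbE.
set MX := Mq _ _ X0 X; set MY := Mq _ _ X0 Y; set MZ := Mq _ _ X0 (_ + _).
have HX : is_herm MX by apply: herm_Mq; [exact: herm_Bl | exact: herm_Ql].
have HY : is_herm MY by apply: herm_Mq; [exact: herm_Bl | exact: herm_Ql].
have HZ : is_herm MZ by apply: herm_Mq; [exact: herm_Bl | exact: herm_Ql].
have Hcomb : is_herm (rC t *: MX + rC (1 - t) *: MY) by apply/hermD; apply: hermZ.
have tt_ge0 : 0 <= t * (1 - t) by apply: mulr_ge0; lra.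
have gap := Mq_segment (Bl mnd A) (Ql mnd A) X0 X Y t.
apply: le_trans (g_cvx _ _ _ HX HY t0 t1).
case: mnd g_mono gap @MX @MY @MZ HX HY HZ Hcomb => /= g_mono gap HX HY HZ Hcomb.
- apply: (g_mono _ _ Hcomb HZ); rewrite /loewner_ge gap.
  exact/psd_scale/psd_congr/pos_part_psd.
- apply: (g_mono _ _ HZ Hcomb); rewrite /loewner_ge -opprB gap -scalerN -mulNmx -mulmxN.
  exact/psd_scale/psd_congr/neg_part_nsd.
Qed.

Definition term_deriv (H : 'M[C]_(n, r)) : R := rtr (quad_diff A X0 H) G.

Lemma fderiv_quad : has_fderiv (fun X => g (cH X *m A *m X)) X0 term_deriv.
Proof.
have Hg : is_gradient g (Mq A 0 X0 X0) G by rewrite Mq_quad; exact: gradient_W0.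
apply: fderiv_ext (fderiv_Mq_comp HA (herm0 R n) Hg) => [X|H]; first by rewrite Mq_quad.
by rewrite addr0.
Qed.

Lemma fderiv_lowerb : has_fderiv (lowerb g Dg mnd A X0) X0 term_deriv.
Proof.
have [HG _] := gradient_W0.
have Hphi := gradient_affine (Mq (Ql mnd A) (Bl mnd A) X0 X0) (g W0 - rtr W0 G) HG.
apply: fderiv_ext (fderiv_Mq_comp (herm_Ql mnd A) (herm_Bl mnd A) Hphi) => [X|H].
  by rewrite lowerbE.
by rewrite QlBl.
Qed.

Lemma fderiv_upperb : has_fderiv (upperb g mnd A X0) X0 term_deriv.
Proof.
have Hg : is_gradient g (Mq (Bl mnd A) (Ql mnd A) X0 X0) G.
  by rewrite Mq_at BlQl //; exact: gradient_W0.
apply: fderiv_ext (fderiv_Mq_comp (herm_Bl mnd A) (herm_Ql mnd A) Hg) => [X|H].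
  by rewrite upperbE.
by rewrite BlQl.
Qed.

Variable a : R.

Definition minorant_term (X : 'M[C]_(n, r)) : R :=
  if 0 < a then a * lowerb g Dg mnd A X0 X else a * upperb g mnd A X0 X.

Lemma minorant_term_concave : concave_on minorant_term.
Proof.
rewrite /minorant_term; case: ltP => [a_gt0|a_le0].
  exact/(concave_scale (ltW a_gt0))/lowerb_concave.
exact/(convex_scale a_le0)/upperb_convex.
Qed.

Lemma minorant_term_le X : minorant_term X <= a * g (cH X *m A *m X).
Proof.
rewrite /minorant_term; case: ltP => [a_gt0|a_le0].
  by rewrite ler_wpM2l ?(ltW a_gt0) ?lowerb_le.
by rewrite ler_wnM2l ?upperb_ge.
Qed.

Lemma minorant_term_at : minorant_term X0 = a * g (cH X0 *m A *m X0).
Proof. by rewrite /minorant_term lowerb_at // upperb_at // if_same. Qed.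

Lemma fderiv_minorant_term :
  has_fderiv minorant_term X0 (fun H => a * term_deriv H).
Proof.
rewrite /minorant_term; case: ltP => _.
  exact/fderivZ/fderiv_lowerb.
exact/fderivZ/fderiv_upperb.
Qed.

End BoundFunctions.

Lemma sum_by_sign (R : realType) (I : finType) (a F U : I -> R) :
  \sum_(k | 0 < a k) a k * F k + \sum_(k | a k < 0) a k * U k =
  \sum_k (if 0 < a k then a k * F k else a k * U k).
Proof.
rewrite [RHS](bigID (fun k => 0 < a k)) /=; congr (_ + _).
  by apply: eq_bigr => k ->.
rewrite [RHS](bigID (fun k => a k < 0)) /= [X in _ + X]big1 ?addr0.
  apply: eq_big => [k|k a_neg]; first by case: (ltgtP (a k) 0).
  by rewrite lt_gtF.
by move=> k; case: (ltgtP (a k) 0) => //= -> _; rewrite mul0r.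
Qed.

Unset Implicit Arguments.
Set Strict Implicit.
Set Printing Implicit Defensive.

Theorem mainTheorem3 (R : realType) (n r K : nat) (alpha : 'I_K -> R)
  (A : 'I_K -> 'M[R[i]]_n) (g : 'I_K -> 'M[R[i]]_r -> R)
  (Dg : 'I_K -> 'M[R[i]]_r -> 'M[R[i]]_r) (mnd : 'I_K -> bool)
  (X0 : 'M[R[i]]_(n, r)) :
  (forall k, is_herm (A k)) ->
  (forall k, in_family (g k) (Dg k) (mnd k)) ->
  [/\ concave_on (fbar alpha A g Dg mnd X0),
      (forall X, fbar alpha A g Dg mnd X0 X <= gqmf alpha A g X),
      fbar alpha A g Dg mnd X0 X0 = gqmf alpha A g X0
    & exists D : 'M[R[i]]_(n, r) -> R,
        has_fderiv (gqmf alpha A g) X0 D /\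
        has_fderiv (fbar alpha A g Dg mnd X0) X0 D].
Proof.
move=> HA Hfam.
pose term k := minorant_term (g k) (Dg k) (mnd k) (A k) X0 (alpha k).
have fbarE X : \sum_k term k X = fbar alpha A g Dg mnd X0 X.
  by rewrite /fbar sum_by_sign.
split.
- apply: concave_ext fbarE _; apply: concave_sum => k.
  exact: minorant_term_concave.
- move=> X; rewrite -fbarE; apply: ler_sum => k _.
  exact: minorant_term_le.
- by rewrite -fbarE; apply: eq_bigr => k _; apply: minorant_term_at.
exists (fun H => \sum_k alpha k * term_deriv (Dg k) (A k) X0 H); split.
- apply: fderiv_sum => k; apply: fderivZ.
  exact: fderiv_quad.
- apply: fderiv_ext fbarE (fun=> erefl) _; apply: fderiv_sum => k.
  exact: fderiv_minorant_term.
Qed.
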